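(* Let $r>0$, $\kappa>0$, $\tau>0$ and $p\in[0,1]$ be fixed, with $\varepsilon=pe^{-\tau}<1$, and set \[ q_c:=1-\frac{1}{r}\,\frac{1}{1-\varepsilon}. \] For $q\in\mathbb{R}$ let $u(q)=(1-q,0,q)$ and consider the disease-free equilibrium $\widehat{u(q)}$ of the SIQ system, whose eigenvalues are the roots (counted with multiplicity as zeros of an analytic function) of \[ \chi_q(\lambda)=\lambda\Big(\lambda+1-r(1-q)\big(1-\varepsilon e^{-\tau\lambda}\big)\Big). \] If $q\ge q_c$, then $\widehat{u(q)}$ is linearly stable, and if $q<q_c$, then $\widehat{u(q)}$ is linearly unstable. In more detail: for $q\ne q_c$ the eigenvalue $\lambda=0$ has multiplicity $1$ and there is no other eigenvalue on the imaginary axis; for $q\ge q_c$ all nonzero eigenvalues $\lambda$ satisfy $\mathrm{Re}(\lambda)<0$; for $q<q_c$ there is exactly one eigenvalue $\lambda_1$ with $\mathrm{Re}(\lambda_1)>0$.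
   Context: The SIQ system is \[ \dot S(t)=-rS(t)I(t)+I(t)+r\varepsilon S(t-\tau-\kappa)I(t-\tau-\kappa),\quad \dot I(t)=rS(t)I(t)-I(t)-r\varepsilon S(t-\tau)I(t-\tau), \] \[ \dot Q(t)=r\varepsilon\big[S(t-\tau)I(t-\tau)-S(t-\tau-\kappa)I(t-\tau-\kappa)\big], \] with $\varepsilon=pe^{-\tau}$, considered on continuous histories on $[-\tau-\kappa,0]$ with $S+I+Q\equiv1$. For $u\in\mathbb{R}^3$, $\hat u$ is the constant function with value $u$. The function $\chi_q$ is the characteristic function of the linearization at $\widehat{u(q)}$. An equilibrium on this line of equilibria is called linearly stable if all eigenvalues other than $\lambda=0$ have negative real part, and linearly unstable if some eigenvalue has positive real part. *)

From Stdlib Require Import Reals.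
From Coquelicot Require Import Coquelicot.
Open Scope R_scope.

Definition Cexp (z : C) : C :=
  (exp (Re z) * cos (Im z), exp (Re z) * sin (Im z)).

Definition eps (p tau : R) : R := p * exp (- tau).

Definition q_crit (r p tau : R) : R := 1 - / r * / (1 - eps p tau).

Definition chi (r p tau q : R) (l : C) : C :=
  Cmult l (Cminus (Cplus l (RtoC 1))
             (Cmult (RtoC (r * (1 - q)))
                (Cminus (RtoC 1) (Cmult (RtoC (eps p tau)) (Cexp (Cmult (RtoC (- tau)) l)))))).

Definition eigenvalue (r p tau q : R) (l : C) : Prop := chi r p tau q l = RtoC 0.

(* lambda is an eigenvalue of multiplicity exactly 1, i.e. a simple zero of the
   analytic function chi_q: chi_q(lambda) = 0 and chi_q'(lambda) <> 0
   (complex derivative). *)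
Definition simple_eigenvalue (r p tau q : R) (l : C) : Prop :=
  eigenvalue r p tau q l /\
  exists d : C, @is_derive C_AbsRing C_NormedModule (chi r p tau q) l d /\ d <> RtoC 0.

Definition linearly_stable (r p tau q : R) : Prop :=
  forall l : C, eigenvalue r p tau q l -> l <> RtoC 0 -> Re l < 0.

Definition linearly_unstable (r p tau q : R) : Prop :=
  exists l : C, eigenvalue r p tau q l /\ Re l > 0.

From Stdlib Require Import Reals Lra Psatz.
From Coquelicot Require Import Coquelicot.
Open Scope R_scope.

(* Besides 0, the eigenvalues are the roots of
   chi_factor(l) = l + 1 - a (1 - eps e^(-tau l)),  a = r (1 - q).
   For Re w >= 0 one has |1 - e^(-w)| <= |w|, so a root l with Re l >= 0 satisfies
   |l + c| <= |a| eps tau |l|, where c = 1 - a (1 - eps) has the sign of q - q_c.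
   For q >= q_c, c >= 0: if a > 0, eps (1 + tau) < 1 gives a eps tau < 1, so l = 0;
   if a <= 0, the real part of the root equation already has the wrong sign.
   For q < q_c, chi_factor has a real root x_s > 0; convexity of chi_factor on the
   real axis excludes roots with 0 <= Re l < x_s, and the same contraction estimate
   centred at x_s leaves x_s as the only root with Re l >= x_s.  Simplicity of 0 and
   of x_s is read off from chi'(0) = c and chi'(x_s) = x_s (1 - a eps tau e^(-tau x_s)). *)

Lemma exp_neg_le_1 z : 0 <= z -> exp (- z) <= 1.
Proof.
  intros Hz. rewrite <- exp_0. destruct (Req_dec z 0) as [->|Hz0].
  - rewrite Ropp_0; lra.
  - left. apply exp_increasing; lra.
Qed.

Lemma exp_convex a b t : 0 <= t <= 1 ->
  exp ((1 - t) * a + t * b) <= (1 - t) * exp a + t * exp b.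
Proof.
  intros Ht. set (m := (1 - t) * a + t * b).
  assert (Hsplit : forall z, exp z = exp m * exp (z - m))
    by (intros z; rewrite <- exp_plus; f_equal; ring).
  rewrite (Hsplit a), (Hsplit b).
  pose proof (exp_ineq1_le (a - m)). pose proof (exp_ineq1_le (b - m)).
  assert (Hmean : (1 - t) * (1 + (a - m)) + t * (1 + (b - m)) = 1) by (unfold m; ring).
  assert (1 <= (1 - t) * exp (a - m) + t * exp (b - m)) by nra.
  pose proof (exp_pos m). nra.
Qed.

Lemma Rabs_sin_le v : Rabs (sin v) <= Rabs v.
Proof.
  assert (Hpos : forall w, 0 <= w -> Rabs (sin w) <= w).
  { intros w Hw. apply Rabs_le. pose proof (SIN_bound w).
    destruct (Rle_lt_dec w 1); [|lra].
    destruct (Req_dec w 0) as [->|Hw0]; [rewrite sin_0; lra|].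
    pose proof (sin_lt_x w ltac:(lra)). pose proof PI2_1.
    assert (0 <= sin w) by (apply sin_ge_0; lra). lra. }
  destruct (Rle_lt_dec 0 v).
  - rewrite (Rabs_pos_eq v) by lra. auto.
  - rewrite <- (Rabs_Ropp (sin v)), <- sin_neg, (Rabs_left1 v) by lra.
    apply Hpos; lra.
Qed.

Lemma one_sub_cos_bound v : 0 <= 1 - cos v <= v ^ 2 / 2.
Proof.
  replace v with (2 * (v / 2)) at 1 2 by field. rewrite cos_2a_sin.
  pose proof (Rabs_sin_le (v / 2)) as H. apply Rsqr_le_abs_1 in H.
  unfold Rsqr in H. split; nra.
Qed.

Lemma Rabs_sin_sub_le v : Rabs v <= 1 -> Rabs (sin v - v) <= v ^ 2.
Proof.
  assert (Hpos : forall w, 0 <= w <= 1 -> Rabs (sin w - w) <= w ^ 2).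
  { intros w Hw. pose proof PI2_1.
    destruct (sin_bound w 0 ltac:(lra) ltac:(lra)) as [Hlow _].
    replace (sin_approx w (2 * 0 + 1)) with (w - w ^ 3 / 6) in Hlow
      by (unfold sin_approx, sin_term; simpl; field).
    destruct (Req_dec w 0) as [->|Hw0]; [rewrite sin_0, Rminus_0_r, Rabs_R0; lra|].
    pose proof (sin_lt_x w ltac:(lra)).
    assert (w ^ 3 <= w ^ 2) by (pose proof (pow2_ge_0 w); nra).
    apply Rabs_le. lra. }
  intros Hv. apply Rabs_le_between in Hv. destruct (Rle_lt_dec 0 v).
  - apply Hpos; lra.
  - rewrite <- (Ropp_involutive v), sin_neg.
    replace (- sin (- v) - - - v) with (- (sin (- v) - - v)) by ring.
    rewrite Rabs_Ropp. replace ((- - v) ^ 2) with ((- v) ^ 2) by ring.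
    apply Hpos; lra.
Qed.

Lemma exp_sub_taylor1_bound u : Rabs u <= / 2 -> 0 <= exp u - 1 - u <= 2 * u ^ 2.
Proof.
  intros Hu. apply Rabs_le_between in Hu.
  pose proof (exp_ineq1_le u). pose proof (exp_ineq1_le (- u)).
  assert (Hinv : exp u * exp (- u) = 1) by (rewrite <- exp_plus, Rplus_opp_r; apply exp_0).
  pose proof (exp_pos u).
  assert (exp u * (1 - u) <= 1) by nra.
  split; nra.
Qed.

(** * The complex exponential *)

Lemma Cexp_add z w : Cexp (z + w)%C = (Cexp z * Cexp w)%C.
Proof.
  destruct z as [x y], w as [u v]. unfold Cexp, Cplus, Cmult; simpl.
  rewrite exp_plus, cos_plus, sin_plus. f_equal; ring.
Qed.

Lemma Cexp_RtoC x : Cexp (RtoC x) = RtoC (exp x).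
Proof. unfold Cexp, RtoC; simpl. rewrite cos_0, sin_0. f_equal; ring. Qed.

Lemma Cmod_le_sq_bound a m : 0 <= m -> Re a ^ 2 + Im a ^ 2 <= m ^ 2 -> Cmod a <= m.
Proof.
  intros Hm H. rewrite <- Cmod2_alt in H. pose proof (Cmod_ge_0 a). nra.
Qed.

Lemma Cmod_le_add_nonneg z c : 0 <= Re z -> 0 <= c -> Cmod z <= Cmod (z + RtoC c)%C.
Proof.
  intros Hz Hc. apply Cmod_le_sq_bound; [apply Cmod_ge_0|]. rewrite Cmod2_alt.
  destruct z as [x y]. simpl in *. nra.
Qed.

Lemma Cmod_le_contraction_eq_0 z k : k < 1 -> Cmod z <= k * Cmod z -> z = 0%C.
Proof. intros Hk Hz. apply Cmod_eq_0. pose proof (Cmod_ge_0 z). nra. Qed.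

Lemma Re_1_sub_Cexp_opp_ge0 w : 0 <= Re w -> 0 <= Re (1 - Cexp (- w))%C.
Proof.
  destruct w as [u v]. simpl. intros Hu.
  pose proof (exp_neg_le_1 u Hu). pose proof (exp_pos (- u)). pose proof (COS_bound (- v)).
  nra.
Qed.

Lemma Cmod_1_sub_Cexp_opp_le w : 0 <= Re w -> Cmod (1 - Cexp (- w))%C <= Cmod w.
Proof.
  intros Hu. apply Cmod_le_sq_bound; [apply Cmod_ge_0|]. rewrite Cmod2_alt.
  destruct w as [u v]. simpl in *. rewrite cos_neg, sin_neg.
  pose proof (exp_ineq1_le (- u)). pose proof (exp_neg_le_1 u Hu). pose proof (exp_pos (- u)).
  pose proof (one_sub_cos_bound v). pose proof (sin2_cos2 v). unfold Rsqr in *.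
  replace ((1 - (exp (- u) * cos v - 0)) ^ 2 + (0 - exp (- u) * - sin v) ^ 2)
    with ((1 - exp (- u)) ^ 2 + 2 * exp (- u) * (1 - cos v)) by nra.
  assert ((1 - exp (- u)) ^ 2 <= u ^ 2) by nra.
  nra.
Qed.

Lemma Cmod_Cexp_sub_taylor1_le h : Cmod h <= / 2 -> Cmod (Cexp h - 1 - h)%C <= 4 * Cmod h ^ 2.
Proof.
  intros Hh. pose proof (Cmod2_alt h) as Hm. pose proof (Cmod_ge_0 h).
  pose proof (Rmax_Cmod h) as Hcomp.
  destruct h as [u v]. simpl in Hm, Hcomp |- *. set (m := Cmod (u, v)) in *.
  assert (Hu : Rabs u <= / 2) by (pose proof (Rmax_l (Rabs u) (Rabs v)); lra).
  assert (Hv : Rabs v <= 1) by (pose proof (Rmax_r (Rabs u) (Rabs v)); lra).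
  pose proof (exp_sub_taylor1_bound u Hu) as Hexp.
  pose proof (one_sub_cos_bound v). pose proof (Rabs_sin_sub_le v Hv).
  pose proof (Rabs_sin_le v). pose proof (COS_bound v).
  apply Rabs_le_between in Hu.
  assert (Hre : Rabs (exp u * cos v - 1 - u) <= 2 * m ^ 2).
  { replace (exp u * cos v - 1 - u)
      with ((exp u - 1 - u) * cos v - (1 + u) * (1 - cos v)) by ring.
    apply Rabs_le. split; nra. }
  assert (Him : Rabs (exp u * sin v - v) <= 2 * m ^ 2).
  { replace (exp u * sin v - v) with ((exp u - 1) * sin v + (sin v - v)) by ring.
    eapply Rle_trans; [apply Rabs_triang|]. rewrite Rabs_mult.
    assert (Rabs (exp u - 1) <= 2 * Rabs u)
      by (apply Rabs_le; unfold Rabs; destruct Rcase_abs; nra).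
    assert (Rabs (exp u - 1) * Rabs (sin v) <= 2 * Rabs u * Rabs v)
      by (apply Rmult_le_compat; auto using Rabs_pos).
    assert (2 * Rabs u * Rabs v <= u ^ 2 + v ^ 2)
      by (rewrite <- (pow2_abs u), <- (pow2_abs v); pose proof (pow2_ge_0 (Rabs u - Rabs v)); lra).
    nra. }
  apply Cmod_le_sq_bound; [nra|].
  replace (Re _) with (exp u * cos v - 1 - u) by (simpl; ring).
  replace (Im _) with (exp u * sin v - v) by (simpl; ring).
  rewrite <- (pow2_abs (exp u * cos v - 1 - u)), <- (pow2_abs (exp u * sin v - v)).
  pose proof (Rabs_pos (exp u * cos v - 1 - u)). pose proof (Rabs_pos (exp u * sin v - v)).
  nra.
Qed.

(* Coquelicot's product and chain rules for functions [C -> C] are stated in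
   [AbsRing_NormedModule C_AbsRing]; the statement uses [C_NormedModule], which has the
   same norm, see [is_derive_C_NormedModule]. *)
Local Notation is_Cderive := (@is_derive C_AbsRing (AbsRing_NormedModule C_AbsRing)).

Lemma is_derive_Cexp z : is_Cderive Cexp z (Cexp z).
Proof.
  split; [apply is_linear_scal_l|].
  intros z' Hz'.
  apply (@is_filter_lim_locally_unique _ (AbsRing_NormedModule C_AbsRing)) in Hz'. subst z'.
  intros eps. set (M := Cmod (Cexp z)).
  assert (HM : 0 <= M) by apply Cmod_ge_0.
  pose proof (cond_pos eps) as Heps.
  assert (Hdelta : 0 < Rmin (/ 2) (eps / (4 * M + 1)))
    by (apply Rmin_pos; [lra | apply Rdiv_lt_0_compat; lra]).
  exists (mkposreal _ Hdelta). intros y Hy.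
  change (Cmod (y - z)%C < Rmin (/ 2) (eps / (4 * M + 1))) in Hy.
  change (Cmod (Cexp y - Cexp z - (y - z) * Cexp z)%C <= eps * Cmod (y - z)%C).
  set (h := (y - z)%C) in *.
  replace y with (z + h)%C by (unfold h; ring).
  rewrite Cexp_add.
  replace (Cexp z * Cexp h - Cexp z - h * Cexp z)%C
    with (Cexp z * (Cexp h - 1 - h))%C by ring.
  rewrite Cmod_mult. fold M.
  pose proof (Rmin_l (/ 2) (eps / (4 * M + 1))). pose proof (Rmin_r (/ 2) (eps / (4 * M + 1))).
  pose proof (Cmod_Cexp_sub_taylor1_le h ltac:(lra)). pose proof (Cmod_ge_0 h).
  assert (Cmod h * (4 * M + 1) <= eps).
  { apply (Rmult_le_reg_r (/ (4 * M + 1))); [apply Rinv_0_lt_compat; lra|].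
    rewrite Rmult_assoc, Rinv_r by lra. lra. }
  apply Rle_trans with (M * (4 * Cmod h ^ 2)); [apply Rmult_le_compat_l; lra|].
  nra.
Qed.

Lemma is_derive_C_NormedModule (f : C -> C) z d :
  is_Cderive f z d -> @is_derive C_AbsRing C_NormedModule f z d.
Proof.
  intros [[Hadd Hscal [M HM]] Hdom]. split; [|exact Hdom].
  constructor; [exact Hadd | exact Hscal | exists M; exact HM].
Qed.

Lemma is_derive_Cmult_l (k l : C) : is_Cderive (fun t => k * t)%C l k.
Proof.
  pose proof (@is_derive_scal_l _ (AbsRing_NormedModule C_AbsRing)
    (fun t => t) l one k (is_derive_id l)) as H.
  change (scal one k) with (1 * k)%C in H. rewrite Cmult_1_l in H.
  eapply is_derive_ext; [|exact H]. intros t. apply Cmult_comm.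
Qed.

Lemma is_Cderive_ext (f g : C -> C) z d d' :
  (forall t, f t = g t) -> d = d' -> is_Cderive f z d -> is_Cderive g z d'.
Proof. intros Hfg <-. apply is_derive_ext, Hfg. Qed.

Definition chi_factor (a e tau : R) (l : C) : C :=
  (l + 1 - RtoC a * (1 - RtoC e * Cexp (RtoC (- tau) * l)))%C.

Lemma chi_eq_mul_factor r p tau q l :
  chi r p tau q l = (l * chi_factor (r * (1 - q)) (eps p tau) tau l)%C.
Proof. reflexivity. Qed.

Lemma is_derive_chi_factor a e tau l :
  is_Cderive (chi_factor a e tau) l (1 - RtoC (a * e * tau) * Cexp (RtoC (- tau) * l))%C.
Proof.
  set (V := AbsRing_NormedModule C_AbsRing).
  pose proof (is_derive_comp _ _ l _ _ (is_derive_Cexp _) (is_derive_Cmult_l (RtoC (- tau)) l))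
    as Hexp.
  pose proof (is_derive_mult _ _ l _ _ (is_derive_const (V := V) (RtoC (a * e)) l) Hexp Cmult_comm)
    as Hmul.
  pose proof (is_derive_plus _ _ l _ _ (is_derive_id l) Hmul) as Hsum.
  pose proof (is_derive_plus _ _ l _ _ Hsum (is_derive_const (V := V) (RtoC (1 - a)) l)) as H.
  revert H. apply is_Cderive_ext.
  - intros t. change (t + RtoC (a * e) * Cexp (RtoC (- tau) * t) + RtoC (1 - a)
      = t + 1 - RtoC a * (1 - RtoC e * Cexp (RtoC (- tau) * t)))%C.
    rewrite RtoC_mult, RtoC_minus. ring.
  - change (1 + (0 * Cexp (RtoC (- tau) * l)
      + RtoC (a * e) * (RtoC (- tau) * Cexp (RtoC (- tau) * l))) + 0
      = 1 - RtoC (a * e * tau) * Cexp (RtoC (- tau) * l))%C.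
    rewrite !RtoC_mult, RtoC_opp. ring.
Qed.

Lemma is_derive_mul_chi_factor a e tau l :
  is_Cderive (fun t => t * chi_factor a e tau t)%C l
    (chi_factor a e tau l + l * (1 - RtoC (a * e * tau) * Cexp (RtoC (- tau) * l)))%C.
Proof.
  pose proof (is_derive_mult _ _ l _ _ (is_derive_id l) (is_derive_chi_factor a e tau l) Cmult_comm)
    as H.
  revert H. apply is_Cderive_ext; [reflexivity|].
  change (1 * chi_factor a e tau l + l * (1 - RtoC (a * e * tau) * Cexp (RtoC (- tau) * l))
    = chi_factor a e tau l + l * (1 - RtoC (a * e * tau) * Cexp (RtoC (- tau) * l)))%C.
  ring.
Qed.

(** * Roots of the characteristic function in the closed right half-plane *)

Section RootLocation.

Variables a e tau : R.
Hypothesis Htau : 0 < tau.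
Hypothesis He : 0 <= e < 1.

Definition chi_factor_re (s : R) : R := s + 1 - a + a * e * exp (- (tau * s)).

Lemma chi_factor_RtoC s : chi_factor a e tau (RtoC s) = RtoC (chi_factor_re s).
Proof.
  unfold chi_factor, chi_factor_re.
  replace (RtoC (- tau) * RtoC s)%C with (RtoC (- (tau * s)))
    by (rewrite <- RtoC_mult; f_equal; ring).
  rewrite Cexp_RtoC.
  repeat (rewrite <- RtoC_plus || rewrite <- RtoC_minus || rewrite <- RtoC_mult).
  f_equal; ring.
Qed.

Lemma chi_factor_shift s mu :
  chi_factor a e tau (RtoC s + mu)%C
  = (mu + RtoC (chi_factor_re s)
     - RtoC (a * e * exp (- (tau * s))) * (1 - Cexp (- (RtoC tau * mu))))%C.
Proof.
  unfold chi_factor, chi_factor_re.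
  replace (RtoC (- tau) * (RtoC s + mu))%C with (RtoC (- (tau * s)) + - (RtoC tau * mu))%C
    by (rewrite !RtoC_opp, RtoC_mult; ring).
  rewrite Cexp_add, Cexp_RtoC.
  repeat (rewrite RtoC_plus || rewrite RtoC_minus || rewrite RtoC_mult).
  ring.
Qed.

Lemma chi_factor_root_eq s mu : chi_factor a e tau (RtoC s + mu)%C = 0%C ->
  (mu + RtoC (chi_factor_re s))%C
  = (RtoC (a * e * exp (- (tau * s))) * (1 - Cexp (- (RtoC tau * mu))))%C.
Proof.
  intros Hroot. rewrite chi_factor_shift in Hroot.
  set (w := (RtoC (a * e * exp (- (tau * s))) * (1 - Cexp (- (RtoC tau * mu))))%C) in *.
  replace (mu + RtoC (chi_factor_re s))%C with (mu + RtoC (chi_factor_re s) - w + w)%C by ring.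
  rewrite Hroot. ring.
Qed.

Lemma chi_factor_root_Re s mu : chi_factor a e tau (RtoC s + mu)%C = 0%C ->
  Re mu + chi_factor_re s
  = a * e * exp (- (tau * s)) * Re (1 - Cexp (- (RtoC tau * mu)))%C.
Proof.
  intros Hroot. apply chi_factor_root_eq, (f_equal Re) in Hroot.
  rewrite re_plus, re_scal_l in Hroot. exact Hroot.
Qed.

Lemma chi_factor_root_Cmod_le s mu : chi_factor a e tau (RtoC s + mu)%C = 0%C -> 0 <= Re mu ->
  Cmod (mu + RtoC (chi_factor_re s))%C <= Rabs (a * e * exp (- (tau * s))) * tau * Cmod mu.
Proof using Htau.
  intros Hroot Hmu.
  rewrite (chi_factor_root_eq _ _ Hroot), Cmod_mult, Cmod_R, (Rmult_assoc (Rabs _)).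
  apply Rmult_le_compat_l; [apply Rabs_pos|].
  replace (tau * Cmod mu) with (Cmod (RtoC tau * mu)%C)
    by (rewrite Cmod_mult, Cmod_R, Rabs_pos_eq; lra).
  apply Cmod_1_sub_Cexp_opp_le. rewrite re_scal_l. nra.
Qed.

Lemma chi_factor_re_0 : chi_factor_re 0 = 1 - a * (1 - e).
Proof. unfold chi_factor_re. rewrite Rmult_0_r, Ropp_0, exp_0. ring. Qed.

Lemma chi_factor_rhp_root_eq_0 l : e * (1 + tau) < 1 -> a * (1 - e) <= 1 ->
  chi_factor a e tau l = 0%C -> 0 <= Re l -> l = 0%C.
Proof using Htau He.
  intros Hetau Hc Hroot Hl. rewrite <- (Cplus_0_l l) in Hroot.
  assert (Hexp0 : exp (- (tau * 0)) = 1) by (rewrite Rmult_0_r, Ropp_0; apply exp_0).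
  destruct (Rle_lt_dec a 0) as [Ha|Ha].
  - exfalso. pose proof (chi_factor_root_Re 0 l Hroot) as HRe.
    pose proof (Re_1_sub_Cexp_opp_ge0 (RtoC tau * l)%C ltac:(rewrite re_scal_l; nra)).
    rewrite chi_factor_re_0, Hexp0 in HRe.
    assert (a * e * 1 <= 0) by nra. nra.
  - apply (Cmod_le_contraction_eq_0 l (a * e * tau)); [nra|].
    pose proof (chi_factor_root_Cmod_le 0 l Hroot Hl) as Hbound.
    rewrite chi_factor_re_0, Hexp0, Rmult_1_r, Rabs_pos_eq in Hbound by nra.
    pose proof (Cmod_le_add_nonneg l (1 - a * (1 - e)) Hl ltac:(lra)). lra.
Qed.

Lemma chi_factor_re_root_exists : 1 < a * (1 - e) -> exists xs, 0 < xs /\ chi_factor_re xs = 0.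
Proof using He.
  intros Hc. assert (Ha : 0 < a) by nra.
  assert (Hcont : continuity chi_factor_re) by (unfold chi_factor_re; reg).
  destruct (IVT chi_factor_re 0 a Hcont Ha) as [xs [[Hxs0 _] Hxs]].
  - rewrite chi_factor_re_0. lra.
  - unfold chi_factor_re. pose proof (exp_pos (- (tau * a))).
    assert (0 <= a * e * exp (- (tau * a))) by (apply Rmult_le_pos; nra). lra.
  - exists xs. split; [|exact Hxs].
    destruct Hxs0 as [|<-]; [lra|]. rewrite chi_factor_re_0 in Hxs. lra.
Qed.

Section RealRoot.

Variable xs : R.
Hypothesis Hunstable : 1 < a * (1 - e).
Hypothesis Hxs : 0 < xs.
Hypothesis Hroot : chi_factor_re xs = 0.

Lemma chi_factor_re_neg_below_root x : 0 <= x < xs -> chi_factor_re x < 0.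
Proof using He Hunstable Hxs Hroot.
  intros Hx. assert (Ha : 0 < a) by nra.
  set (t := x / xs).
  assert (Ht : 0 <= t < 1).
  { unfold t. split; [apply Rdiv_le_0_compat; lra|].
    apply (Rmult_lt_reg_r xs); [lra|]. unfold Rdiv. rewrite Rmult_assoc, Rinv_l; lra. }
  assert (Hx_t : x = t * xs) by (unfold t; field; lra).
  (* chi_factor_re is convex, so it lies below its chord on [0, xs] *)
  pose proof (exp_convex 0 (- (tau * xs)) t ltac:(lra)) as Hchord.
  rewrite exp_0 in Hchord.
  replace ((1 - t) * 0 + t * - (tau * xs)) with (- (tau * x)) in Hchord by (rewrite Hx_t; ring).
  pose proof chi_factor_re_0 as H0. unfold chi_factor_re in *.
  assert (a * e * exp (- (tau * x)) <= a * e * ((1 - t) * 1 + t * exp (- (tau * xs))))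
    by (apply Rmult_le_compat_l; nra).
  nra.
Qed.

Lemma chi_factor_re_slope_at_root : a * e * tau * exp (- (tau * xs)) < 1.
Proof using He Hunstable Hxs Hroot.
  assert (Ha : 0 < a) by nra.
  pose proof chi_factor_re_0 as H0. unfold chi_factor_re in H0, Hroot.
  pose proof (exp_ineq1_le (tau * xs)). pose proof (exp_pos (- (tau * xs))).
  set (E := exp (- (tau * xs))) in *.
  assert (HE : E * exp (tau * xs) = 1) by (unfold E; rewrite <- exp_plus, Rplus_opp_l; apply exp_0).
  assert (Hsec : tau * xs * E <= 1 - E).
  { assert (E * (1 + tau * xs) <= E * exp (tau * xs)) by (apply Rmult_le_compat_l; lra). lra. }
  assert (Hchord : a * e * (1 - E) < xs) by nra.
  assert (a * e * (tau * xs * E) <= a * e * (1 - E)) by (apply Rmult_le_compat_l; nra).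
  nra.
Qed.

Lemma chi_factor_rhp_root_eq_real_root l :
  chi_factor a e tau l = 0%C -> 0 <= Re l -> l = RtoC xs.
Proof using Htau He Hunstable Hxs Hroot.
  intros Hl Hre. assert (Ha : 0 < a) by nra.
  assert (Hge : xs <= Re l).
  { destruct (Rlt_le_dec (Re l) xs) as [Hlt|]; [exfalso|assumption].
    replace l with (RtoC (Re l) + (0, Im l))%C in Hl
      by (destruct l as [x y]; unfold RtoC, Cplus; simpl; f_equal; ring).
    pose proof (chi_factor_root_Re _ _ Hl) as HRe. simpl Re in HRe at 1.
    pose proof (Re_1_sub_Cexp_opp_ge0 (RtoC tau * (0, Im l))%C
      ltac:(rewrite re_scal_l; simpl; lra)).
    pose proof (chi_factor_re_neg_below_root (Re l) ltac:(lra)).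
    pose proof (exp_pos (- (tau * Re l))).
    assert (0 <= a * e * exp (- (tau * Re l))) by (apply Rmult_le_pos; nra).
    nra. }
  replace l with (RtoC xs + (l - RtoC xs))%C in Hl by ring.
  pose proof (chi_factor_root_Cmod_le _ _ Hl ltac:(destruct l; simpl in *; lra)) as Hbound.
  rewrite Hroot, Cplus_0_r, Rabs_pos_eq in Hbound
    by (pose proof (exp_pos (- (tau * xs))); apply Rmult_le_pos; nra).
  assert (Hzero : (l - RtoC xs)%C = 0%C).
  { apply (Cmod_le_contraction_eq_0 _ (a * e * exp (- (tau * xs)) * tau)); [|exact Hbound].
    pose proof chi_factor_re_slope_at_root. lra. }
  replace l with (RtoC xs + (l - RtoC xs))%C by ring. rewrite Hzero. ring.
Qed.

End RealRoot.

End RootLocation.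

(** * Eigenvalues of the linearization at the disease-free equilibrium *)

Lemma eps_nonneg p tau : 0 <= p -> 0 <= eps p tau.
Proof. intros Hp. unfold eps. pose proof (exp_pos (- tau)). nra. Qed.

Lemma eps_mul_1_add_lt_1 p tau : 0 < tau -> 0 <= p <= 1 -> eps p tau * (1 + tau) < 1.
Proof.
  intros Htau Hp. unfold eps.
  pose proof (exp_ineq1 tau ltac:(lra)). pose proof (exp_pos (- tau)).
  assert (Hinv : exp (- tau) * exp tau = 1) by (rewrite <- exp_plus, Rplus_opp_l; apply exp_0).
  assert (exp (- tau) * (1 + tau) < exp (- tau) * exp tau) by (apply Rmult_lt_compat_l; lra).
  assert (0 <= exp (- tau) * (1 + tau)) by (apply Rmult_le_pos; lra).
  assert (p * (exp (- tau) * (1 + tau)) <= exp (- tau) * (1 + tau)) by nra.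
  lra.
Qed.

Lemma q_crit_gap r p tau q : 0 < r -> eps p tau < 1 ->
  1 - r * (1 - q) * (1 - eps p tau) = r * (1 - eps p tau) * (q - q_crit r p tau).
Proof. intros Hr He. unfold q_crit. field. split; lra. Qed.

Lemma simple_eigenvalue_RtoC r p tau q s :
  s * chi_factor_re (r * (1 - q)) (eps p tau) tau s = 0 ->
  chi_factor_re (r * (1 - q)) (eps p tau) tau s
    + s * (1 - r * (1 - q) * eps p tau * tau * exp (- (tau * s))) <> 0 ->
  simple_eigenvalue r p tau q (RtoC s).
Proof.
  intros Heig Hderiv. split.
  - unfold eigenvalue. rewrite chi_eq_mul_factor, chi_factor_RtoC, <- RtoC_mult, Heig.
    reflexivity.
  - eexists. split.
    + apply is_derive_C_NormedModule.
      eapply is_derive_ext; [intros t; symmetry; apply chi_eq_mul_factor|].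
      apply is_derive_mul_chi_factor.
    + replace (RtoC (- tau) * RtoC s)%C with (RtoC (- (tau * s)))
        by (rewrite <- RtoC_mult; f_equal; ring).
      rewrite chi_factor_RtoC, Cexp_RtoC.
      repeat (rewrite <- RtoC_plus || rewrite <- RtoC_minus || rewrite <- RtoC_mult).
      intros H. apply RtoC_inj in H. auto.
Qed.

Section LinearizedSIQ.

Variables r p tau q : R.
Hypothesis Htau : 0 < tau.
Hypothesis He : 0 <= eps p tau < 1.
Hypothesis Hetau : eps p tau * (1 + tau) < 1.

Lemma eigenvalue_nonzero_factor l : eigenvalue r p tau q l -> l <> 0%C ->
  chi_factor (r * (1 - q)) (eps p tau) tau l = 0%C.
Proof.
  unfold eigenvalue. rewrite chi_eq_mul_factor. intros Hl Hl0.
  destruct (Ceq_dec (chi_factor (r * (1 - q)) (eps p tau) tau l) 0) as [|Hf]; [assumption|].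
  exfalso. exact (Cmult_neq_0 _ _ Hl0 Hf Hl).
Qed.

Lemma linearly_stable_of_gap : r * (1 - q) * (1 - eps p tau) <= 1 -> linearly_stable r p tau q.
Proof using Htau He Hetau.
  intros Hc l Hl Hl0. destruct (Rlt_le_dec (Re l) 0) as [|Hre]; [assumption|].
  exfalso. apply Hl0, (chi_factor_rhp_root_eq_0 (r * (1 - q)) (eps p tau) tau Htau He); auto.
  apply eigenvalue_nonzero_factor; assumption.
Qed.

Lemma unstable_eigenvalue_of_gap : 1 < r * (1 - q) * (1 - eps p tau) ->
  exists l1, simple_eigenvalue r p tau q l1 /\ Re l1 > 0 /\
    forall l, eigenvalue r p tau q l -> 0 <= Re l -> l <> 0%C -> l = l1.
Proof using Htau He.
  intros Hc.
  destruct (chi_factor_re_root_exists _ _ tau He Hc) as [xs [Hxs Hroot]].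
  exists (RtoC xs). split; [|split].
  - apply simple_eigenvalue_RtoC.
    + rewrite Hroot. ring.
    + pose proof (chi_factor_re_slope_at_root _ _ tau He xs Hc Hxs Hroot).
      rewrite Hroot. nra.
  - simpl. lra.
  - intros l Hl Hre Hl0.
    apply (chi_factor_rhp_root_eq_real_root (r * (1 - q)) (eps p tau) tau Htau He xs Hc Hxs Hroot);
      [apply eigenvalue_nonzero_factor|]; assumption.
Qed.

Lemma zero_simple_eigenvalue : r * (1 - q) * (1 - eps p tau) <> 1 ->
  simple_eigenvalue r p tau q 0%C.
Proof.
  intros Hc. apply simple_eigenvalue_RtoC; [ring|].
  rewrite chi_factor_re_0. lra.
Qed.

Lemma imaginary_eigenvalue_eq_0 l : r * (1 - q) * (1 - eps p tau) <> 1 ->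
  eigenvalue r p tau q l -> Re l = 0 -> l = 0%C.
Proof using Htau He Hetau.
  intros Hc Hl Hre. destruct (Ceq_dec l 0) as [|Hl0]; [assumption|].
  destruct (Rlt_le_dec 1 (r * (1 - q) * (1 - eps p tau))) as [Hunst|Hst].
  - destruct (unstable_eigenvalue_of_gap Hunst) as [l1 [_ [Hre1 Huniq]]].
    rewrite (Huniq l Hl ltac:(lra) Hl0) in Hre. lra.
  - apply (chi_factor_rhp_root_eq_0 (r * (1 - q)) (eps p tau) tau Htau He); auto; [|lra].
    apply eigenvalue_nonzero_factor; assumption.
Qed.

End LinearizedSIQ.

Theorem theorem3 (r kappa tau p : R) :
  0 < r -> 0 < kappa -> 0 < tau -> 0 <= p <= 1 -> eps p tau < 1 ->
  forall q : R,
    (q >= q_crit r p tau -> linearly_stable r p tau q) /\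
    (q < q_crit r p tau -> linearly_unstable r p tau q) /\
    (q <> q_crit r p tau ->
       simple_eigenvalue r p tau q (RtoC 0) /\
       (forall l : C, eigenvalue r p tau q l -> Re l = 0 -> l = RtoC 0)) /\
    (q < q_crit r p tau ->
       exists l1 : C, simple_eigenvalue r p tau q l1 /\ Re l1 > 0 /\
         (forall l : C, eigenvalue r p tau q l -> Re l > 0 -> l = l1)).
Proof.
  intros Hr _ Htau Hp Heps q.
  assert (He : 0 <= eps p tau < 1) by (split; [apply eps_nonneg, Hp | exact Heps]).
  pose proof (eps_mul_1_add_lt_1 p tau Htau Hp) as Hetau.
  pose proof (q_crit_gap r p tau q Hr Heps) as Hgap.
  assert (Hpos : 0 < r * (1 - eps p tau)) by (apply Rmult_lt_0_compat; lra).
  assert (Hunstable : q < q_crit r p tau -> 1 < r * (1 - q) * (1 - eps p tau)) by nra.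
  assert (Hcrit : q <> q_crit r p tau -> r * (1 - q) * (1 - eps p tau) <> 1).
  { intros Hq Hc. apply Hq. nra. }
  split; [|split; [|split]].
  - intros Hq. apply linearly_stable_of_gap; auto. nra.
  - intros Hq.
    destruct (unstable_eigenvalue_of_gap r p tau q Htau He (Hunstable Hq))
      as [l1 [[Hl1 _] [Hre1 _]]].
    exists l1. split; assumption.
  - intros Hq. split.
    + apply zero_simple_eigenvalue, Hcrit, Hq.
    + intros l. apply imaginary_eigenvalue_eq_0; auto.
  - intros Hq.
    destruct (unstable_eigenvalue_of_gap r p tau q Htau He (Hunstable Hq))
      as [l1 [Hsimple [Hre1 Huniq]]].
    exists l1. split; [exact Hsimple | split; [exact Hre1|]].
    intros l Hl Hre. apply Huniq; [assumption | lra |].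
    intros ->. simpl in Hre. lra.
Qed.
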